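(* Let $P:\mathcal{C}^{op}\to\mathsf{InfSl}$ be a boolean hyperdoctrine. Then $\mathsf{Rel}(P)$, with the Boolean algebra structure on each homset $\mathsf{Rel}(P)[X,Y]=P(X\times Y)$ inherited from $P$, is a peircean bicategory.
   Context: An elementary and existential doctrine is a functor $P:\mathcal{C}^{op}\to\mathsf{InfSl}$ ($\mathcal{C}$ with finite products) with equality predicates $\delta_Y\in P(Y\times Y)$ such that $\alpha\mapsto P_{\langle\pi_1,\pi_2\rangle}(\alpha)\wedge P_{\langle\pi_2,\pi_3\rangle}(\delta_Y)$ is left adjoint to $P_{\mathrm{id}_X\times\Delta_Y}$, and with left adjoints $\exists_{\pi_X}\dashv P_{\pi_X}$ along projections satisfying Beck–Chevalley and Frobenius reciprocity. A boolean hyperdoctrine is such a doctrine in which every $P(X)$ is a Boolean algebra and every $P_f$ a Boolean homomorphism. $\mathsf{Rel}(P)$ is the cartesian bicategory with the objects of $\mathcal{C}$, homsets $P(X\times Y)$, identities $\delta_X$, composition $\phi;\psi=\exists_{\pi_{X\times Z}}(P_{\pi_{X\times Y}}(\phi)\wedge P_{\pi_{Y\times Z}}(\psi))$, tensor $\phi\otimes\psi=P_{\langle\pi_X,\pi_Y\rangle}(\phi)\wedge P_{\langle\pi_U,\pi_V\rangle}(\psi)$, comonoids $\Gamma_P(\Delta_X),\Gamma_P(!_X)$ with $\Gamma_P(f)=P_{f\times\mathrm{id}}(\delta_Y)$, and monoids $P_{\mathrm{id}_{X\times X}\times\Delta_X}(\delta_{X\times X})$, $P_{\mathrm{id}_1\times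 !_X}(\delta_1)$. A cartesian bicategory is a poset-enriched symmetric monoidal category with commutative comonoids $(\mathrm{copy}_X,\mathrm{disc}_X)$ and monoids $(\mathrm{cocopy}_X,\mathrm{codisc}_X)$ forming special Frobenius bimonoids, comonoid left adjoint to monoid, every arrow a lax comonoid homomorphism ($c;\mathrm{copy}\le\mathrm{copy};(c\otimes c)$, $c;\mathrm{disc}\le\mathrm{disc}$), with standard coherence. A map is an arrow $f$ for which these two inequalities are equalities. A peircean bicategory is a cartesian bicategory whose homsets are Boolean algebras (with the given order) such that $f;\neg c=\neg(f;c)$ for every map $f:X\to Y$ and arrow $c:Y\to Z$. *)

(* boolean algebras = mathcomp ctbDistrLatticeType. *)
From mathcomp Require Import all_boot all_order.

Set Implicit Arguments.
Unset Strict Implicit.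
Unset Printing Implicit Defensive.

Import Order.TTheory.
Local Open Scope order_scope.

(* Composition [cmp g f] is the usual g o f.                           *)
Record FPCat := {
  ob :> Type;
  hom : ob -> ob -> Type;
  idc : forall X, hom X X;
  cmp : forall X Y Z, hom Y Z -> hom X Y -> hom X Z;
  cmp_id_l : forall X Y (f : hom X Y), cmp (idc Y) f = f;
  cmp_id_r : forall X Y (f : hom X Y), cmp f (idc X) = f;
  cmp_assoc : forall X Y Z W (f : hom X Y) (g : hom Y Z) (h : hom Z W),
      cmp h (cmp g f) = cmp (cmp h g) f;
  one : ob;
  bang : forall X, hom X one;
  bang_uniq : forall X (f : hom X one), f = bang X;
  prod : ob -> ob -> ob;
  p1 : forall X Y, hom (prod X Y) X;
  p2 : forall X Y, hom (prod X Y) Y;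
  pair : forall Z X Y, hom Z X -> hom Z Y -> hom Z (prod X Y);
  p1_pair : forall Z X Y (f : hom Z X) (g : hom Z Y), cmp (p1 X Y) (pair f g) = f;
  p2_pair : forall Z X Y (f : hom Z X) (g : hom Z Y), cmp (p2 X Y) (pair f g) = g;
  pair_uniq : forall Z X Y (h : hom Z (prod X Y)),
      h = pair (cmp (p1 X Y) h) (cmp (p2 X Y) h)
}.

Arguments hom {C} : rename.
Arguments idc {C} X : rename.
Arguments cmp {C X Y Z} : rename.
Arguments one {C} : rename.
Arguments bang {C} X : rename.
Arguments prod {C} : rename.
Arguments p1 {C X Y} : rename.
Arguments p2 {C X Y} : rename.
Arguments pair {C Z X Y} : rename.

(* Conventions: X x Y x Y is read as X x (Y x Y); the projections     *)
(* along which exists_ is given are the first product projections     *)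
(* pi_X : X x Y -> X (all other projections differ by an iso).        *)
Record BoolHyperdoctrine (C : FPCat) (d : Order.disp_t) := {
  Pt : C -> ctbDistrLatticeType d;
  re : forall X Y : C, hom X Y -> Pt Y -> Pt X;
  re_id : forall X (a : Pt X), re (idc X) a = a;
  re_comp : forall X Y Z (f : hom X Y) (g : hom Y Z) (a : Pt Z),
      re (cmp g f) a = re f (re g a);
  re_meet : forall X Y (f : hom X Y) (a b : Pt Y), re f (a `&` b) = re f a `&` re f b;
  re_top : forall X Y (f : hom X Y), re f \top = \top;
  re_join : forall X Y (f : hom X Y) (a b : Pt Y), re f (a `|` b) = re f a `|` re f b;
  re_bot : forall X Y (f : hom X Y), re f \bot = \bot;
  re_compl : forall X Y (f : hom X Y) (a : Pt Y), re f (~` a) = ~` re f a;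
  delta : forall Y : C, Pt (prod Y Y);
  delta_adj : forall (X Y : C) (a : Pt (prod X Y)) (b : Pt (prod X (prod Y Y))),
      (re (pair p1 (cmp p1 p2)) a `&` re p2 (delta Y) <= b)
      = (a <= re (pair p1 (pair p2 p2)) b);
  exq : forall X Y : C, Pt (prod X Y) -> Pt X;
  exq_adj : forall (X Y : C) (a : Pt (prod X Y)) (b : Pt X),
      (exq a <= b) = (a <= re p1 b);
  exq_BC : forall (X X' Y : C) (f : hom X' X) (a : Pt (prod X Y)),
      exq (re (pair (cmp f p1) p2) a) = re f (exq a);
  exq_Frob : forall (X Y : C) (a : Pt (prod X Y)) (b : Pt X),
      exq (re p1 b `&` a) = b `&` exq a
}.

Arguments Pt {C d} P X : rename.
Arguments re {C d} P {X Y} f a : rename.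
Arguments delta {C d} P Y : rename.
Arguments exq {C d} P {X Y} a : rename.

(* Data of a poset-enriched symmetric monoidal category equipped with *)
(* comonoids and monoids on every object.  Composition [bseq c d] is  *)
(* diagrammatic: c ; d.                                               *)
Record BicatData := {
  bob : Type;
  bhom : bob -> bob -> Type;
  ble : forall X Y, bhom X Y -> bhom X Y -> Prop;
  bid : forall X, bhom X X;
  bseq : forall X Y Z, bhom X Y -> bhom Y Z -> bhom X Z;
  bI : bob;
  bten : bob -> bob -> bob;
  btenh : forall X Y U V, bhom X Y -> bhom U V -> bhom (bten X U) (bten Y V);
  bassoc : forall X Y Z, bhom (bten (bten X Y) Z) (bten X (bten Y Z));
  bassoc_inv : forall X Y Z, bhom (bten X (bten Y Z)) (bten (bten X Y) Z);
  blu : forall X, bhom (bten bI X) X;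
  blu_inv : forall X, bhom X (bten bI X);
  bru : forall X, bhom (bten X bI) X;
  bru_inv : forall X, bhom X (bten X bI);
  bsym : forall X Y, bhom (bten X Y) (bten Y X);
  bcopy : forall X, bhom X (bten X X);
  bdisc : forall X, bhom X bI;
  bcocopy : forall X, bhom (bten X X) X;
  bcodisc : forall X, bhom bI X
}.

Arguments bhom {B} : rename.
Arguments ble {B X Y} : rename.
Arguments bid {B} X : rename.
Arguments bseq {B X Y Z} : rename.
Arguments bI {B} : rename.
Arguments bten {B} : rename.
Arguments btenh {B X Y U V} : rename.
Arguments bassoc {B} X Y Z : rename.
Arguments bassoc_inv {B} X Y Z : rename.
Arguments blu {B} X : rename.
Arguments blu_inv {B} X : rename.
Arguments bru {B} X : rename.
Arguments bru_inv {B} X : rename.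
Arguments bsym {B} X Y : rename.
Arguments bcopy {B} X : rename.
Arguments bdisc {B} X : rename.
Arguments bcocopy {B} X : rename.
Arguments bcodisc {B} X : rename.

Section CartesianBicategory.
Variable B : BicatData.
Local Notation "c ;; d" := (bseq c d) (at level 60, right associativity).
Local Notation "c ** d" := (btenh c d) (at level 40, left associativity).

Definition poset_enriched : Prop :=
  [/\ forall (X Y : bob B) (c : bhom X Y), ble c c,
      forall (X Y : bob B) (c d e : bhom X Y), ble c d -> ble d e -> ble c e,
      forall (X Y : bob B) (c d : bhom X Y), ble c d -> ble d c -> c = d,
      forall (X Y Z : bob B) (c c' : bhom X Y) (d d' : bhom Y Z),
        ble c c' -> ble d d' -> ble (c ;; d) (c' ;; d') &
      forall (X Y U V : bob B) (c c' : bhom X Y) (d d' : bhom U V),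
        ble c c' -> ble d d' -> ble (c ** d) (c' ** d')].

Definition is_category : Prop :=
  [/\ forall (X Y : bob B) (c : bhom X Y), bid X ;; c = c,
      forall (X Y : bob B) (c : bhom X Y), c ;; bid Y = c &
      forall (X Y Z W : bob B) (c : bhom X Y) (d : bhom Y Z) (e : bhom Z W),
        (c ;; d) ;; e = c ;; (d ;; e)].

Definition symmetric_monoidal : Prop :=
  [/\
      (forall (X U : bob B), bid X ** bid U = bid (bten X U)),
      (forall (X Y Z U V W : bob B) (c : bhom X Y) (d : bhom Y Z) (c' : bhom U V) (d' : bhom V W),
         (c ;; d) ** (c' ;; d') = (c ** c') ;; (d ** d')),
      [/\ (forall (X Y Z : bob B), bassoc X Y Z ;; bassoc_inv X Y Z = bid _)
           /\ (forall (X Y Z : bob B), bassoc_inv X Y Z ;; bassoc X Y Z = bid _),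
          (forall (X : bob B), blu X ;; blu_inv X = bid _)
           /\ (forall (X : bob B), blu_inv X ;; blu X = bid _),
          (forall (X : bob B), bru X ;; bru_inv X = bid _)
           /\ (forall (X : bob B), bru_inv X ;; bru X = bid _) &
          forall (X Y : bob B), bsym X Y ;; bsym Y X = bid _],
      [/\ forall (X Y Z X' Y' Z' : bob B) (f : bhom X X') (g : bhom Y Y') (h : bhom Z Z'),
            ((f ** g) ** h) ;; bassoc X' Y' Z' = bassoc X Y Z ;; (f ** (g ** h)),
          forall (X X' : bob B) (f : bhom X X'), (bid bI ** f) ;; blu X' = blu X ;; f,
          forall (X X' : bob B) (f : bhom X X'), (f ** bid bI) ;; bru X' = bru X ;; f &
          forall (X Y X' Y' : bob B) (f : bhom X X') (g : bhom Y Y'),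
            (f ** g) ;; bsym X' Y' = bsym X Y ;; (g ** f)] &
      [/\ forall (W X Y Z : bob B),
            bassoc (bten W X) Y Z ;; bassoc W X (bten Y Z)
            = (bassoc W X Y ** bid Z) ;; bassoc W (bten X Y) Z ;; (bid W ** bassoc X Y Z),
          forall (X Y : bob B), bassoc X bI Y ;; (bid X ** blu Y) = bru X ** bid Y &
          forall (X Y Z : bob B),
            bassoc X Y Z ;; bsym X (bten Y Z) ;; bassoc Y Z X
            = (bsym X Y ** bid Z) ;; bassoc Y X Z ;; (bid Y ** bsym X Z)]].

Definition bmid (A B' C D : bob B) :
    bhom (bten (bten A B') (bten C D)) (bten (bten A C) (bten B' D)) :=
  bassoc A B' (bten C D)
  ;; (bid A ** bassoc_inv B' C D)
  ;; (bid A ** (bsym B' C ** bid D))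
  ;; (bid A ** bassoc C B' D)
  ;; bassoc_inv A C (bten B' D).

Definition comonoids_monoids : Prop :=
  [/\
      [/\ forall (X : bob B), bcopy X ;; (bcopy X ** bid X) ;; bassoc X X X
                    = bcopy X ;; (bid X ** bcopy X),
          forall (X : bob B), bcopy X ;; (bdisc X ** bid X) ;; blu X = bid X,
          forall (X : bob B), bcopy X ;; (bid X ** bdisc X) ;; bru X = bid X &
          forall (X : bob B), bcopy X ;; bsym X X = bcopy X],
      [/\ forall (X : bob B), bassoc_inv X X X ;; (bcocopy X ** bid X) ;; bcocopy X
                    = (bid X ** bcocopy X) ;; bcocopy X,
          forall (X : bob B), blu_inv X ;; (bcodisc X ** bid X) ;; bcocopy X = bid X,
          forall (X : bob B), bru_inv X ;; (bid X ** bcodisc X) ;; bcocopy X = bid X &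
          forall (X : bob B), bsym X X ;; bcocopy X = bcocopy X],
      [/\ forall (X : bob B), bcopy X ;; bcocopy X = bid X,
          forall (X : bob B), (bcopy X ** bid X) ;; bassoc X X X ;; (bid X ** bcocopy X)
                    = bcocopy X ;; bcopy X &
          forall (X : bob B), (bid X ** bcopy X) ;; bassoc_inv X X X ;; (bcocopy X ** bid X)
                    = bcocopy X ;; bcopy X],
      [/\ forall (X : bob B), ble (bid X) (bcopy X ;; bcocopy X),
          forall (X : bob B), ble (bcocopy X ;; bcopy X) (bid (bten X X)),
          forall (X : bob B), ble (bid X) (bdisc X ;; bcodisc X) &
          forall (X : bob B), ble (bcodisc X ;; bdisc X) (bid bI)] /\
      (forall (X Y : bob B) (c : bhom X Y), ble (c ;; bcopy Y) (bcopy X ;; (c ** c))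
                                 /\ ble (c ;; bdisc Y) (bdisc X)) &
      [/\ forall (X Y : bob B), bcopy (bten X Y) = (bcopy X ** bcopy Y) ;; bmid X X Y Y,
          forall (X Y : bob B), bdisc (bten X Y) = (bdisc X ** bdisc Y) ;; blu bI,
          bcopy (@bI B) = blu_inv (@bI B) &
          bdisc (@bI B) = bid (@bI B)] /\
      [/\ forall (X Y : bob B), bcocopy (bten X Y) = bmid X Y X Y ;; (bcocopy X ** bcocopy Y),
          forall (X Y : bob B), bcodisc (bten X Y) = blu_inv bI ;; (bcodisc X ** bcodisc Y),
          bcocopy (@bI B) = blu (@bI B) &
          bcodisc (@bI B) = bid (@bI B)]].

Definition cartesian_bicategory : Prop :=
  [/\ poset_enriched, is_category, symmetric_monoidal & comonoids_monoids].

Definition is_map (X Y : bob B) (f : bhom X Y) : Prop :=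
  f ;; bcopy Y = bcopy X ;; (f ** f) /\ f ;; bdisc Y = bdisc X.

End CartesianBicategory.

Definition boolean_algebra_on (T : Type) (le : T -> T -> Prop)
    (meet join : T -> T -> T) (top bot : T) (neg : T -> T) : Prop :=
  [/\ [/\ (forall x, le x x),
          (forall x y z, le x y -> le y z -> le x z) &
          (forall x y, le x y -> le y x -> x = y)],
      (forall x y z, le z (meet x y) <-> le z x /\ le z y),
      (forall x y z, le (join x y) z <-> le x z /\ le y z),
      (forall x, le x top /\ le bot x) /\
      (forall x y z, meet x (join y z) = join (meet x y) (meet x z)) &
      (forall x, meet x (neg x) = bot /\ join x (neg x) = top)].

Record HomBoolOps (B : BicatData) := {
  hmeet : forall X Y : bob B, bhom X Y -> bhom X Y -> bhom X Y;
  hjoin : forall X Y : bob B, bhom X Y -> bhom X Y -> bhom X Y;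
  htop : forall X Y, @bhom B X Y;
  hbot : forall X Y, @bhom B X Y;
  hneg : forall X Y : bob B, bhom X Y -> bhom X Y
}.

Definition peircean_bicategory (B : BicatData) (O : HomBoolOps B) : Prop :=
  [/\ cartesian_bicategory B,
      (forall X Y : bob B, boolean_algebra_on (@ble B X Y) (@hmeet B O X Y) (@hjoin B O X Y)
                     (htop O X Y) (hbot O X Y) (@hneg B O X Y)) &
      (forall (X Y Z : bob B) (f : bhom X Y) (c : bhom Y Z),
         is_map f -> bseq f (hneg O c) = hneg O (bseq f c))].

Section RelP.
Variables (C : FPCat) (d : Order.disp_t) (P : BoolHyperdoctrine C d).

Local Notation "g \o f" := (cmp g f).

Definition RelHom (X Y : C) : Type := Pt P (prod X Y).

Definition graphP (X Y : C) (f : hom X Y) : RelHom X Y :=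
  re P (pair (f \o p1) p2) (delta P Y).

(* phi ; psi = exists_{pi_{XxZ}} (P_{pi_{XxY}} phi /\ P_{pi_{YxZ}} psi),
   computed over (X x Z) x Y *)
Definition rel_comp (X Y Z : C) (phi : RelHom X Y) (psi : RelHom Y Z) : RelHom X Z :=
  exq P (re P (pair (p1 \o p1) p2) phi `&` re P (pair p2 (p2 \o p1)) psi).

Definition rel_tensor (X Y U V : C) (phi : RelHom X Y) (psi : RelHom U V)
    : RelHom (prod X U) (prod Y V) :=
  re P (pair (p1 \o p1) (p1 \o p2)) phi `&` re P (pair (p2 \o p1) (p2 \o p2)) psi.

Definition RelP : BicatData := {|
  bob := ob C;
  bhom := RelHom;
  ble := fun (X Y : C) (a b : RelHom X Y) => is_true (a <= b);
  bid := fun X => delta P X;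
  bseq := rel_comp;
  bI := one;
  bten := prod;
  btenh := rel_tensor;
  bassoc := fun X Y Z => graphP (pair (p1 \o p1) (pair (p2 \o p1) p2) :
                                   hom (prod (prod X Y) Z) (prod X (prod Y Z)));
  bassoc_inv := fun X Y Z => graphP (pair (pair p1 (p1 \o p2)) (p2 \o p2) :
                                   hom (prod X (prod Y Z)) (prod (prod X Y) Z));
  blu := fun X => graphP (p2 : hom (prod one X) X);
  blu_inv := fun X => graphP (pair (bang X) (idc X));
  bru := fun X => graphP (p1 : hom (prod X one) X);
  bru_inv := fun X => graphP (pair (idc X) (bang X));
  bsym := fun X Y => graphP (pair p2 p1 : hom (prod X Y) (prod Y X));
  bcopy := fun X => graphP (pair (idc X) (idc X));
  bdisc := fun X => graphP (bang X);
  bcocopy := fun X =>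
    re P (pair p1 (pair p2 p2) : hom (prod (prod X X) X) (prod (prod X X) (prod X X)))
       (delta P (prod X X));
  bcodisc := fun X =>
    re P (pair p1 (bang X \o p2) : hom (prod one X) (prod one one)) (delta P one)
|}.

Definition RelP_ops : HomBoolOps RelP :=
  @Build_HomBoolOps RelP
    (fun (X Y : C) (a b : RelHom X Y) => a `&` b)
    (fun (X Y : C) (a b : RelHom X Y) => a `|` b)
    (fun X Y : C => (\top : RelHom X Y))
    (fun X Y : C => (\bot : RelHom X Y))
    (fun (X Y : C) (a : RelHom X Y) => ~` a).

End RelP.

From Pilot Require Import Defs.
From mathcomp Require Import all_boot all_order.

(* Read in the internal first-order logic of P, an arrow X -> Y of Rel(P) is
   a formula phi(x, y): composition is relational composition, the graph of f
   is the formula f x = y, and the monoid structure is the converse of the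
   comonoid structure.  Each axiom of a cartesian bicategory becomes a
   first-order entailment, provable from the rules of equality (reflexivity and
   substitution, both extracted from the adjunction defining delta) and of the
   existential quantifier (its adjunction, Beck-Chevalley, Frobenius).  The
   coherence equations hold because the graph construction is a monoidal
   functor from C, so they reduce to equations between arrows of C.
   For the Peirce law, a map f is total (f;disc = disc) and single-valued
   (f;copy = copy;(f (x) f)), so f;c and f;~c are disjoint and cover the top
   element; hence they are complements of each other. *)

Set Implicit Arguments.
Unset Strict Implicit.
Unset Printing Implicit Defensive.

Import Order.Theory.
Local Open Scope order_scope.

Lemma compl_unique (disp : Order.disp_t) (L : ctbDistrLatticeType disp) (x y : L) :
  x `&` y = \bot -> x `|` y = \top -> y = ~` x.
Proof.
move=> xy0 xy1; apply/le_anti/andP; split.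
  by rewrite -(disjoint_lexUl _ (x := y) (z := x)) ?joinCx ?lex1 // meetC.
by rewrite -(cover_leIxl (z := x)) // meetCx le0x.
Qed.

Section FiniteProducts.
Variable C : FPCat.
Local Notation "g \o f" := (cmp g f).

Lemma hom_ext (Z X Y : C) (f g : hom Z (prod X Y)) :
  p1 \o f = p1 \o g -> p2 \o f = p2 \o g -> f = g.
Proof. by move=> h1 h2; rewrite (pair_uniq f) (pair_uniq g) h1 h2. Qed.

Lemma pair_cmp (W Z X Y : C) (f : hom Z X) (g : hom Z Y) (h : hom W Z) :
  pair f g \o h = pair (f \o h) (g \o h).
Proof. by apply: hom_ext; rewrite !cmp_assoc ?p1_pair ?p2_pair. Qed.

Lemma pair_eta (X Y : C) : pair (@p1 C X Y) p2 = idc _.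
Proof. by apply: hom_ext; rewrite ?p1_pair ?p2_pair !cmp_id_r. Qed.

Lemma pair_eta_cmp (Z X Y : C) (h : hom Z (prod X Y)) : pair (p1 \o h) (p2 \o h) = h.
Proof. by rewrite -pair_uniq. Qed.

End FiniteProducts.

Ltac hom_simp_step := first [ rewrite cmp_id_l | rewrite cmp_id_r | rewrite -cmp_assoc
  | rewrite p1_pair | rewrite p2_pair | rewrite pair_cmp ].

Ltac hom_simp := repeat first [ hom_simp_step | rewrite pair_eta | rewrite pair_eta_cmp ].

Ltac hom_eq := hom_simp; first [ reflexivity
  | apply: hom_ext; hom_eq
  | apply: (etrans (bang_uniq _)); apply: esym; apply: bang_uniq ].

Section Relations.
Variables (C : FPCat) (d : Order.disp_t) (P : BoolHyperdoctrine C d).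
Local Notation "g \o f" := (cmp g f).
Local Notation re := (re P).
Local Notation exq := (exq P).
Local Notation dl := (delta P).
Local Notation one := (@Defs.one C).

Lemma re_mono (X Y : C) (f : hom X Y) (a b : Pt P Y) : a <= b -> re f a <= re f b.
Proof. by move/meet_idPl=> h; rewrite -h re_meet leIr. Qed.

Lemma exq_unit (X Y : C) (a : Pt P (prod X Y)) : a <= re p1 (exq a).
Proof. by rewrite -exq_adj. Qed.

Lemma exq_elim (X Y : C) (a : Pt P (prod X Y)) b : a <= re p1 b -> exq a <= b.
Proof. by rewrite exq_adj. Qed.

Lemma exq_intro (X Y : C) (a : Pt P (prod X Y)) (t : hom X Y) b :
  b <= re (pair (idc X) t) a -> b <= exq a.
Proof.
move=> /le_trans; apply; have := re_mono (pair (idc X) t) (exq_unit a).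
by rewrite -re_comp p1_pair re_id.
Qed.

Lemma exq_mono (X Y : C) (a b : Pt P (prod X Y)) : a <= b -> exq a <= exq b.
Proof. by move=> h; apply: exq_elim; apply: le_trans h (exq_unit b). Qed.

Lemma exq_Frobr (X Y : C) (a : Pt P (prod X Y)) (b : Pt P X) :
  exq a `&` b = exq (a `&` re p1 b).
Proof. by rewrite meetC -exq_Frob meetC. Qed.

Lemma exq_join (X Y : C) (a b : Pt P (prod X Y)) : exq (a `|` b) = exq a `|` exq b.
Proof.
apply/le_anti/andP; split.
  by apply: exq_elim; rewrite re_join leU2 ?exq_unit.
by rewrite leUx !exq_mono ?leUl ?leUr.
Qed.

Lemma delta_refl (Z Y : C) (t : hom Z Y) : re (pair t t) (dl Y) = \top.
Proof.
apply/le_anti; rewrite lex1 /=.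
have := delta_adj (\top : Pt P (prod Z Y)) (re p2 (dl Y)).
rewrite leIr => /esym/idP/(re_mono (pair (idc Z) t)).
rewrite re_top -!re_comp.
by have -> : p2 \o (pair p1 (pair p2 p2) \o pair (idc Z) t) = pair t t by hom_eq.
Qed.

Lemma delta_subst (W Y Z : C) (a : Pt P (prod W Y)) (h : hom Z W) (s t : hom Z Y) :
  re (pair s t) (dl Y) `&` re (pair h s) a <= re (pair h t) a.
Proof.
have := delta_adj a (re (pair p1 (p2 \o p2)) a).
rewrite -re_comp.
have -> : pair p1 (p2 \o p2) \o pair p1 (pair p2 p2) = idc (prod W Y) by hom_eq.
rewrite re_id lexx => /idP/(re_mono (pair h (pair s t))).
rewrite re_meet -!re_comp meetC.
have -> : pair p1 (p1 \o p2) \o pair h (pair s t) = pair h s by hom_eq.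
have -> : p2 \o pair h (pair s t) = pair s t by hom_eq.
by have -> : pair p1 (p2 \o p2) \o pair h (pair s t) = pair h t by hom_eq.
Qed.

Lemma delta_sym (Z Y : C) (s t : hom Z Y) : re (pair s t) (dl Y) = re (pair t s) (dl Y).
Proof.
suff le_sym (u v : hom Z Y) : re (pair u v) (dl Y) <= re (pair v u) (dl Y).
  by apply/le_anti; rewrite !le_sym.
have := delta_subst (re (pair p2 (u \o p1)) (dl Y)) (idc Z) u v.
rewrite -!re_comp.
have -> : pair p2 (u \o p1) \o pair (idc Z) u = pair u u by hom_eq.
have -> : pair p2 (u \o p1) \o pair (idc Z) v = pair v u by hom_eq.
by rewrite delta_refl meetx1.
Qed.

Lemma delta_trans (Z Y : C) (r s t : hom Z Y) :
  re (pair r s) (dl Y) `&` re (pair s t) (dl Y) <= re (pair r t) (dl Y).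
Proof.
have := delta_subst (re (pair (r \o p1) p2) (dl Y)) (idc Z) s t.
rewrite -!re_comp.
have -> : pair (r \o p1) p2 \o pair (idc Z) s = pair r s by hom_eq.
have -> : pair (r \o p1) p2 \o pair (idc Z) t = pair r t by hom_eq.
by rewrite meetC.
Qed.

Lemma delta_one : dl one = \top.
Proof.
have e : @p1 C one one = p2 by rewrite (bang_uniq p1) (bang_uniq p2).
by rewrite -[dl one]re_id -pair_eta -e delta_refl.
Qed.

Lemma le_delta_subst (W Y Z : C) (a : Pt P (prod W Y)) (h : hom Z W) (s t : hom Z Y) b c :
  b <= re (pair s t) (dl Y) -> b <= re (pair h s) a -> re (pair h t) a = c -> b <= c.
Proof. by move=> h1 h2 <-; apply: le_trans (delta_subst a h s t); rewrite lexI h1 h2. Qed.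

Lemma le_delta_substl (W Y Z : C) (a : Pt P (prod Y W)) (h : hom Z W) (s t : hom Z Y) b c :
  b <= re (pair s t) (dl Y) -> b <= re (pair s h) a -> re (pair t h) a = c -> b <= c.
Proof.
move=> h1 h2 <-; apply: (le_delta_subst (a := re (pair p2 p1) a) (h := h) h1).
  by rewrite -re_comp; have -> : pair p2 p1 \o pair h s = pair s h by hom_eq.
by rewrite -re_comp; have -> : pair p2 p1 \o pair h t = pair t h by hom_eq.
Qed.

Lemma le_delta_trans (Z Y : C) (r s t : hom Z Y) b :
  b <= re (pair r s) (dl Y) -> b <= re (pair s t) (dl Y) -> b <= re (pair r t) (dl Y).
Proof. by move=> h1 h2; apply: le_trans (delta_trans r s t); rewrite lexI h1 h2. Qed.

Lemma le_delta_sym (Z Y : C) (s t : hom Z Y) b :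
  b <= re (pair t s) (dl Y) -> b <= re (pair s t) (dl Y).
Proof. by rewrite delta_sym. Qed.

Lemma re_delta_eta (Z Y : C) (m : hom Z (prod Y Y)) :
  re m (dl Y) = re (pair (p1 \o m) (p2 \o m)) (dl Y).
Proof. by rewrite pair_eta_cmp. Qed.

(* Normal form: reindexings pushed through the connectives down to the atoms,
   composites of arrows left-associated. *)
Ltac re_step := first [ rewrite -re_comp | rewrite re_id | rewrite re_meet
  | rewrite re_join | rewrite re_top | rewrite re_bot | rewrite re_compl
  | rewrite -exq_BC | rewrite delta_refl | rewrite meetx1 | rewrite meet1x
  | rewrite delta_one ].

Ltac re_norm := repeat first [ re_step | progress hom_simp ].

Ltac meet_pick := first [ exact: lexx | apply: leIxl; meet_pick | apply: leIxr; meet_pick ].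

Ltac delta_chain n := lazymatch goal with |- is_true (?b <= re (pair ?r ?t) (dl ?Y)) =>
  first [ meet_pick | apply: le_delta_sym; meet_pick | rewrite delta_refl; exact: lex1
        | lazymatch n with S ?m =>
           match b with
           | context [re (pair r ?s) (dl Y)] =>
               apply: (le_delta_trans (s := s)); [meet_pick | delta_chain m]
           | context [re (pair ?s r) (dl Y)] =>
               apply: (le_delta_trans (s := s)); [apply: le_delta_sym; meet_pick | delta_chain m]
           end end ] end.

(* No eta-contraction here: it would undo the expansion. *)
Ltac delta_expand := repeat match goal with |- context [re ?m (dl ?Y)] =>
  lazymatch m with pair _ _ => fail | _ => rewrite (re_delta_eta m) end end;
  repeat hom_simp_step.

(* Entailment between conjunctions of atoms: an atom of the conclusion is either
   a hypothesis, an equation derivable by symmetry and transitivity, or a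
   hypothesis [a(s1, s2)] rewritten along derivable equations. *)
Ltac entail_atoms := lazymatch goal with
 | |- is_true (_ <= \top) => exact: lex1
 | |- is_true (\bot <= _) => exact: le0x
 | |- is_true (_ <= _ `&` _) => rewrite lexI; apply/andP; split; entail_atoms
 | |- is_true (_ <= re (pair _ _) (dl _)) => delta_chain 3
 | |- is_true (?b <= re (pair ?t1 ?t2) ?c) =>
     first [ meet_pick | apply: exq_mono; entail_atoms
           | match b with context [re (pair ?s1 ?s2) c] =>
               apply: (le_delta_subst (a := c) (h := t1) (s := s2) (t := t2));
               [ delta_chain 3
               | apply: (le_delta_substl (a := c) (h := s2) (s := s1) (t := t1));
                 [ delta_chain 3 | meet_pick | reflexivity ]
               | reflexivity ] end ]
 | |- _ => first [ meet_pick | apply: exq_mono; entail_atoms ] end.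

Ltac entail := delta_expand; entail_atoms.

Lemma delta_prod (X Y : C) : dl (prod X Y) =
  re (pair (p1 \o p1) (p1 \o p2)) (dl X) `&` re (pair (p2 \o p1) (p2 \o p2)) (dl Y).
Proof.
apply/le_anti/andP; split.
  rewrite lexI; apply/andP; split.
    apply: (le_delta_subst (a := re (pair (p1 \o (p1 \o p1)) (p1 \o p2)) (dl X))
             (h := idc _) (s := p1) (t := p2)); re_norm => //; entail.
  apply: (le_delta_subst (a := re (pair (p2 \o (p1 \o p1)) (p2 \o p2)) (dl Y))
           (h := idc _) (s := p1) (t := p2)); re_norm => //; entail.
pose x := p1 \o (@p1 C (prod X Y) (prod X Y)); pose y := p2 \o (@p1 C (prod X Y) (prod X Y)).
pose x' := p1 \o (@p2 C (prod X Y) (prod X Y)); pose y' := p2 \o (@p2 C (prod X Y) (prod X Y)).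
(* from x = x' and y = y' derive (x, y) = (x', y') by rewriting one coordinate at a time *)
apply: (le_delta_subst
          (a := re (pair (pair (x \o p1) (y \o p1)) (pair (x' \o p1) p2)) (dl (prod X Y)))
          (h := idc _) (s := y) (t := y')).
- re_norm; entail.
- apply: (le_delta_subst
          (a := re (pair (pair (x \o p1) (y \o p1)) (pair p2 (y \o p1))) (dl (prod X Y)))
          (h := idc _) (s := x) (t := x')).
  + re_norm; entail.
  + rewrite /x /y; re_norm; entail.
  + by rewrite /x /y /y'; re_norm.
- by rewrite /x /y /y' /x'; re_norm.
Qed.

Ltac rel_norm := repeat first [ re_step | rewrite delta_prod | rewrite exq_Frobr
  | rewrite -exq_Frob | progress hom_simp ].

Ltac exq_left := apply: exq_elim; rel_norm.
Tactic Notation "exq_witness" uconstr(t) := refine (exq_intro (t := t) _); rel_norm.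
Ltac rel_eq := apply/le_anti/andP; split; rel_norm; entail.

Local Notation G := (graphP P).
Local Notation "a ;; b" := (rel_comp a b) (at level 60, right associativity).
Local Notation "a ** b" := (rel_tensor a b) (at level 40, left associativity).
Local Notation copy X := (G (pair (idc X) (idc X))).
Local Notation cocopy X :=
  (re (pair p1 (pair p2 p2) : hom (prod (prod X X) X) (prod (prod X X) (prod X X)))
      (dl (prod X X))).
Local Notation disc X := (G (bang X)).
Local Notation codisc X :=
  (re (pair p1 (bang X \o p2) : hom (prod one X) (prod one one)) (dl one)).

Definition rel_conv (X Y : C) (a : RelHom P X Y) : RelHom P Y X := re (pair p2 p1) a.

Lemma graph_comp (X Y Z : C) (f : hom X Y) (psi : RelHom P Y Z) :
  G f ;; psi = re (pair (f \o p1) p2) psi.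
Proof.
rewrite /rel_comp /graphP; apply/le_anti/andP; split.
  exq_left; apply: (le_delta_substl (a := psi) (h := p2 \o p1) (s := p2) (t := f \o (p1 \o p1)));
  rel_norm => //; entail.
by exq_witness (f \o p1); entail.
Qed.

Lemma comp_conv_graph (X Y Z : C) (phi : RelHom P X Y) (g : hom Z Y) :
  phi ;; rel_conv (G g) = re (pair p1 (g \o p2)) phi.
Proof.
rewrite /rel_comp /rel_conv /graphP; apply/le_anti/andP; split.
  exq_left; apply: (le_delta_subst (a := phi) (h := p1 \o p1) (s := p2) (t := g \o (p2 \o p1)));
  rel_norm => //; entail.
by exq_witness (g \o p2); entail.
Qed.

Lemma graph_id (X : C) : G (idc X) = dl X.
Proof. by rewrite /graphP; rel_norm. Qed.

Lemma graph_cmp (X Y Z : C) (f : hom X Y) (g : hom Y Z) : G f ;; G g = G (g \o f).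
Proof. by rewrite graph_comp /graphP; rel_norm. Qed.

Lemma graph_tensor (X Y U V : C) (f : hom X Y) (g : hom U V) :
  G f ** G g = G (pair (f \o p1) (g \o p2)).
Proof. rewrite /rel_tensor /graphP; rel_eq. Qed.

Lemma rel_conv_delta (X : C) : rel_conv (dl X) = dl X.
Proof. by rewrite /rel_conv -delta_sym pair_eta re_id. Qed.

Lemma rel_convK (X Y : C) : cancel (@rel_conv X Y) (@rel_conv Y X).
Proof. by move=> a; rewrite /rel_conv; rel_norm. Qed.

Lemma rel_conv_inj (X Y : C) : injective (@rel_conv X Y).
Proof. exact: can_inj (@rel_convK X Y). Qed.

Lemma rel_conv_comp (X Y Z : C) (a : RelHom P X Y) (b : RelHom P Y Z) :
  rel_conv (a ;; b) = rel_conv b ;; rel_conv a.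
Proof. rewrite /rel_comp /rel_conv; rel_eq. Qed.

Lemma rel_conv_tensor (X Y U V : C) (a : RelHom P X Y) (b : RelHom P U V) :
  rel_conv (a ** b) = rel_conv a ** rel_conv b.
Proof. rewrite /rel_tensor /rel_conv; rel_eq. Qed.

Lemma cocopy_conv (X : C) : cocopy X = rel_conv (copy X).
Proof. rewrite /rel_conv /graphP; rel_eq. Qed.

Lemma codisc_conv (X : C) : codisc X = rel_conv (disc X).
Proof. by rewrite /rel_conv /graphP; rel_norm. Qed.

Lemma rel_comp_id_l (X Y : C) (a : RelHom P X Y) : dl X ;; a = a.
Proof. by rewrite -graph_id graph_comp; rel_norm. Qed.

Lemma rel_comp_id_r (X Y : C) (a : RelHom P X Y) : a ;; dl Y = a.
Proof. by rewrite -{1}rel_conv_delta -graph_id comp_conv_graph; rel_norm. Qed.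

Lemma rel_comp_assoc (X Y Z W : C) (a : RelHom P X Y) (b : RelHom P Y Z) (c : RelHom P Z W) :
  (a ;; b) ;; c = a ;; (b ;; c).
Proof.
rewrite /rel_comp; apply/le_anti/andP; split.
  exq_left; exq_left; exq_witness (@p2 C _ Y); exq_witness (p2 \o (@p1 C _ Y)); entail.
exq_left; exq_left; exq_witness (@p2 C _ Z); exq_witness (p2 \o (@p1 C _ Z)); entail.
Qed.

Lemma rel_tensor_comp (X Y Z U V W : C) (a : RelHom P X Y) (b : RelHom P Y Z)
   (a' : RelHom P U V) (b' : RelHom P V W) :
  (a ;; b) ** (a' ;; b') = (a ** a') ;; (b ** b').
Proof.
rewrite /rel_comp /rel_tensor; apply/le_anti/andP; split; rel_norm.
  exq_left; exq_left; exq_witness (pair (p2 \o (@p1 C (prod _ Y) V)) (@p2 C (prod _ Y) V)).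
  entail.
exq_left; exq_witness (p1 \o (@p2 C _ (prod Y V))); exq_witness (p2 \o (@p2 C _ (prod Y V))).
entail.
Qed.

Lemma rel_comp_mono (X Y Z : C) (a a' : RelHom P X Y) (b b' : RelHom P Y Z) :
  a <= a' -> b <= b' -> a ;; b <= a' ;; b'.
Proof. by move=> h1 h2; apply/exq_mono/leI2; apply: re_mono. Qed.

Lemma rel_tensor_mono (X Y U V : C) (a a' : RelHom P X Y) (b b' : RelHom P U V) :
  a <= a' -> b <= b' -> a ** b <= a' ** b'.
Proof. by move=> h1 h2; apply: leI2; apply: re_mono. Qed.

Lemma rel_comp_joinr (X Y Z : C) (a : RelHom P X Y) (b b' : RelHom P Y Z) :
  a ;; (b `|` b') = (a ;; b) `|` (a ;; b').
Proof. by rewrite /rel_comp re_join meetUr exq_join. Qed.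

Lemma rel_comp_top (X Y Z : C) (a : RelHom P X Y) :
  a ;; (\top : RelHom P Y Z) = re p1 (exq a).
Proof. by rewrite /rel_comp; rel_norm. Qed.

Lemma comp_graph_iso (X Y Z : C) (a : RelHom P X Y) (g : hom Y Z) (h : hom Z Y) :
  h \o g = idc Y -> g \o h = idc Z -> a ;; G g = re (pair p1 (h \o p2)) a.
Proof.
move=> hg gh; rewrite -comp_conv_graph; congr (_ ;; _).
have cancel_l (W U V : C) (u : hom U V) (v : hom V U) (k : hom W U) :
    v \o u = idc _ -> v \o (u \o k) = k by move=> vu; rewrite cmp_assoc vu cmp_id_l.
rewrite /rel_conv /graphP; apply/le_anti/andP; split; rel_norm.
  apply: (le_delta_subst (a := re (pair (h \o p2) (p1 \o p1)) (dl Y)) (h := idc _)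
            (s := g \o p1) (t := p2)); rel_norm => //.
  by rewrite cancel_l // delta_refl lex1.
apply: (le_delta_subst (a := re (pair (g \o p2) (p2 \o p1)) (dl Z)) (h := idc _)
          (s := h \o p2) (t := p1)); rel_norm => //.
by rewrite cancel_l // delta_refl lex1.
Qed.

Lemma copy_frobenius_l (X : C) :
  (copy X ** dl X) ;; G (pair (p1 \o p1) (pair (p2 \o p1) p2)) ;; (dl X ** cocopy X)
  = cocopy X ;; copy X.
Proof.
rewrite cocopy_conv -!graph_id !graph_tensor ?graph_comp.
rewrite /rel_comp /rel_tensor /rel_conv /graphP; rel_norm.
apply/le_anti/andP; split; last by exq_left; entail.
by exq_witness (p1 \o p1); entail.
Qed.

Lemma copy_frobenius_r (X : C) :
  (dl X ** copy X) ;; G (pair (pair p1 (p1 \o p2)) (p2 \o p2)) ;; (cocopy X ** dl X)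
  = cocopy X ;; copy X.
Proof.
rewrite cocopy_conv -!graph_id !graph_tensor ?graph_comp.
rewrite /rel_comp /rel_tensor /rel_conv /graphP; rel_norm.
apply/le_anti/andP; split; last by exq_left; entail.
by exq_witness (p1 \o p1); entail.
Qed.

Lemma copy_special (X : C) : copy X ;; cocopy X = dl X.
Proof. by rewrite cocopy_conv comp_conv_graph /graphP; rel_eq. Qed.

Lemma cocopy_copy_le (X : C) : cocopy X ;; copy X <= dl (prod X X).
Proof. by rewrite cocopy_conv /rel_comp /rel_conv /graphP; rel_norm; exq_left; entail. Qed.

Lemma le_disc_codisc (X : C) : dl X <= disc X ;; codisc X.
Proof. by rewrite /rel_comp /graphP; rel_norm; exq_witness (bang _); entail. Qed.

Lemma codisc_disc_le (X : C) : codisc X ;; disc X <= dl one.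
Proof. by rewrite /rel_comp /graphP; rel_norm; entail. Qed.

Lemma rel_lax_copy (X Y : C) (c : RelHom P X Y) : c ;; copy Y <= copy X ;; (c ** c).
Proof. by rewrite graph_comp /rel_comp /rel_tensor /graphP; rel_norm; exq_left; entail. Qed.

Lemma rel_lax_disc (X Y : C) (c : RelHom P X Y) : c ;; disc Y <= disc X.
Proof. by rewrite /rel_comp /graphP; rel_norm; entail. Qed.

Lemma map_single_valued (X Y : C) (f : RelHom P X Y) :
  f ;; copy Y = copy X ;; (f ** f) ->
  forall W (x : hom W X) (y1 y2 : hom W Y),
    re (pair x y1) f `&` re (pair x y2) f <= re (pair y1 y2) (dl Y).
Proof.
move=> f_copy W x y1 y2.
have f_functional : re (pair p1 (p1 \o p2)) f `&` re (pair p1 (p2 \o p2)) f <= re p2 (dl Y).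
  have -> : re (pair p1 (p1 \o p2)) f `&` re (pair p1 (p2 \o p2)) f = copy X ;; (f ** f).
    by rewrite graph_comp /rel_tensor; rel_norm.
  by rewrite -f_copy /rel_comp /graphP; rel_norm; exq_left; entail.
by have := re_mono (pair x (pair y1 y2)) f_functional; rel_norm.
Qed.

Lemma map_total (X Y : C) (f : RelHom P X Y) : f ;; disc Y = disc X -> exq f = \top.
Proof.
rewrite /rel_comp /graphP; rel_norm => /(congr1 (re (pair (idc X) (bang X)))).
by rewrite -exq_BC; rel_norm.
Qed.

Lemma map_comp_compl (X Y Z : C) (f : RelHom P X Y) (c : RelHom P Y Z) :
  f ;; copy Y = copy X ;; (f ** f) -> f ;; disc Y = disc X ->
  f ;; ~` c = ~` (f ;; c).
Proof.
move=> f_copy f_disc; apply: compl_unique; last first.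
  by rewrite -rel_comp_joinr joinxC rel_comp_top (map_total f_disc) re_top.
apply/le_anti; rewrite le0x andbT /rel_comp; rel_norm; exq_left; exq_left.
(* In context f x y1, c y1 z, f x y2, ~c y2 z: single-valuedness gives y1 = y2. *)
pose W := prod (prod (prod X Z) Y) Y.
have f_fun := map_single_valued f_copy (p1 \o (p1 \o p1) : hom W X) (p2 \o p1) p2.
pose c_yz := re (pair p2 (p2 \o (p1 \o p1)) : hom W (prod Y Z)) c.
apply: (@le_trans _ _ (c_yz `&` ~` c_yz)); last by rewrite meetxC.
rewrite lexI; apply/andP; split; last by meet_pick.
apply: (le_delta_substl (a := c) (h := p2 \o (p1 \o p1)) (s := p2 \o p1) (t := p2));
  [| meet_pick | reflexivity].
by apply: le_trans _ f_fun; entail.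
Qed.

Ltac graph_solve := rewrite -?graph_id;
  repeat first [ rewrite graph_cmp | rewrite graph_tensor ];
  f_equal; hom_eq.

(* The monoid structure is the converse of the comonoid structure, and the
   converse is an involutive contravariant monoidal functor. *)
Ltac conv_solve := apply: rel_conv_inj;
  rewrite ?cocopy_conv ?codisc_conv -?graph_id;
  repeat first [ rewrite graph_cmp | rewrite graph_tensor ];
  rewrite ?rel_conv_comp ?rel_conv_tensor ?rel_convK ?rel_conv_delta -?graph_id;
  repeat first [ rewrite graph_cmp | rewrite graph_tensor | rewrite comp_conv_graph
               | rewrite graph_comp ];
  rewrite /rel_conv /graphP /rel_tensor; rel_eq.

Lemma RelP_poset_enriched : poset_enriched (RelP P).
Proof.
split => /=.
- by move=> *; exact: lexx.
- by move=> X Y a b c; apply: le_trans.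
- by move=> X Y a b ab ba; apply/le_anti; rewrite ab ba.
- by move=> *; apply: rel_comp_mono.
- by move=> *; apply: rel_tensor_mono.
Qed.

Lemma RelP_category : is_category (RelP P).
Proof.
split => /=.
- by move=> *; apply: rel_comp_id_l.
- by move=> *; apply: rel_comp_id_r.
- by move=> *; apply: rel_comp_assoc.
Qed.

Lemma RelP_symmetric_monoidal : symmetric_monoidal (RelP P).
Proof.
split => /=.
- by move=> X U; rewrite /rel_tensor; rel_eq.
- by move=> *; apply: rel_tensor_comp.
- by split; [split|split|split|]; move=> *; graph_solve.
- split=> [X Y Z X' Y' Z' f g h | X X' f | X X' f | X Y X' Y' f g];
    [ rewrite (comp_graph_iso _ (h := pair (pair p1 (p1 \o p2)) (p2 \o p2)))
    | rewrite (comp_graph_iso _ (h := pair (bang X') (idc X')))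
    | rewrite (comp_graph_iso _ (h := pair (idc X') (bang X')))
    | rewrite (comp_graph_iso _ (h := pair p2 p1)) ];
    try hom_eq; by rewrite graph_comp /rel_tensor; rel_eq.
- by split; move=> *; graph_solve.
Qed.

Lemma RelP_comonoids_monoids : comonoids_monoids (RelP P).
Proof.
split => /=.
- by split; move=> *; graph_solve.
- by split; move=> *; conv_solve.
- split; [exact: copy_special | exact: copy_frobenius_l | exact: copy_frobenius_r].
- split; last by move=> X Y c; split; [exact: rel_lax_copy | exact: rel_lax_disc].
  split; [by move=> X; rewrite copy_special | exact: cocopy_copy_le
         | exact: le_disc_codisc | exact: codisc_disc_le].
- split; split; try move=> X Y; first [graph_solve | conv_solve].
Qed.

Lemma RelP_boolean_algebra (X Y : C) :
  boolean_algebra_on (@ble (RelP P) X Y) (@hmeet _ (RelP_ops P) X Y)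
    (@hjoin _ (RelP_ops P) X Y) (htop (RelP_ops P) X Y) (hbot (RelP_ops P) X Y)
    (@hneg _ (RelP_ops P) X Y).
Proof.
split => /=.
- split; [exact: lexx | by move=> a b c; apply: le_trans
         | by move=> a b ab ba; apply/le_anti; rewrite ab ba].
- by move=> a b c; rewrite lexI; split => [/andP//|[-> ->]].
- by move=> a b c; rewrite leUx; split => [/andP//|[-> ->]].
- by split=> [a|a b c]; rewrite ?lex1 ?le0x ?meetUr.
- by move=> a; rewrite meetxC joinxC.
Qed.

End Relations.

Theorem proposition30 (C : FPCat) (d : Order.disp_t) (P : BoolHyperdoctrine C d) :
  peircean_bicategory (RelP_ops P).
Proof.
split.
- split; [exact: RelP_poset_enriched | exact: RelP_category
         | exact: RelP_symmetric_monoidal | exact: RelP_comonoids_monoids].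
- exact: RelP_boolean_algebra.
- by move=> X Y Z f c [f_copy f_disc]; apply: map_comp_compl.
Qed.
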